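(* Let $G=(V,E)$ be a finite connected multigraph and let $F,F'$ be spanning 2-forests of $G$. Then the following are equivalent: (1) $F$ and $F'$ are not vertex equivalent; (2) there exists an edge $e\in E(F')$ such that the spanning subgraph with edge set $E(F)\cup\{e\}$ is a tree.
   Context: A spanning 2-forest of $G$ is a subgraph with vertex set $V$, without cycles, having exactly two connected components. For a spanning 2-forest $F$, $\mathcal{P}(F)=\{X,Y\}$ denotes the partition of $V$ into the vertex sets of the two connected components of $F$. Two spanning 2-forests $F,F'$ are vertex equivalent if $\mathcal{P}(F)=\mathcal{P}(F')$. *)

(* A finite multigraph G = (V, E) is given by finite types of
   vertices V and edges E together with endpoint maps src, tgt : E -> V
   (parallel edges and loops allowed). Spanning subgraphs are identified with
   their edge sets S : {set E}. *)
From mathcomp Require Import all_boot.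
Set Implicit Arguments. Unset Strict Implicit. Unset Printing Implicit Defensive.

Section MultiGraph.
Variables (V E : finType) (src tgt : E -> V).

Definition joins (e : E) (x y : V) : bool :=
  ((src e == x) && (tgt e == y)) || ((src e == y) && (tgt e == x)).

Definition adj (S : {set E}) : rel V := fun x y => [exists e in S, joins e x y].

Definition comp (S : {set E}) (x : V) : {set V} := [set y | connect (adj S) x y].

Definition comp_partition (S : {set E}) : {set {set V}} :=
  [set comp S x | x : V].

Definition n_components (S : {set E}) : nat := #|comp_partition S|.

(* (V, S) contains a cycle: k+1 distinct edges of S and k+1 distinct vertices
   v_0, ..., v_k with edge i joining v_i and v_{i+1 mod k+1}
   (k = 0: a loop; k = 1: two parallel edges). *)
Definition has_cycle (S : {set E}) : Prop :=
  exists (k : nat) (es : 'I_k.+1 -> E) (vs : 'I_k.+1 -> V),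
    [/\ injective es, injective vs, (forall i, es i \in S) &
        (forall i, joins (es i) (vs i) (vs (ordS i)))].

Definition acyclic (S : {set E}) : Prop := ~ has_cycle S.

Definition is_spanning_tree (S : {set E}) : Prop :=
  acyclic S /\ n_components S = 1.

Definition is_spanning_2forest (S : {set E}) : Prop :=
  acyclic S /\ n_components S = 2.

Definition vertex_equivalent (F F' : {set E}) : Prop :=
  comp_partition F = comp_partition F'.

Definition graph_connected : Prop :=
  forall x y : V, connect (adj [set: E]) x y.

End MultiGraph.

(* If F and F' induce different partitions, then, as both partitions have two
   blocks, some edge of F' joins the two components of F; adding it to F
   connects everything without closing a cycle, since a cycle through it would
   give a path in F between its endpoints. Conversely, if F and F' induce the
   same partition, the endpoints of any e in F' already lie in one component
   of F, so e |: F still has two components. *)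
From Pilot Require Import Defs.
From mathcomp Require Import all_boot.

Set Implicit Arguments. Unset Strict Implicit. Unset Printing Implicit Defensive.

Lemma val_iter_ordS k (i : 'I_k.+1) n :
  val (iter n (@ordS k.+1) i) = (i + n) %% k.+1.
Proof.
elim: n => [|n IH] /=; first by rewrite addn0 modn_small.
by rewrite IH -addn1 modnDml addn1 addnS.
Qed.

Lemma iter_ordS_neq k (i : 'I_k.+1) n : n < k -> iter n (@ordS k.+1) (ordS i) != i.
Proof.
move=> lt_nk; apply/eqP => /(congr1 val)/eqP.
rewrite -iterSr val_iter_ordS -[X in _ == X](modn_small (ltn_ord i)).
by rewrite -[X in _ == X %% _]addn0 eqn_modDl mod0n modn_small.
Qed.

Lemma iter_ordS_cycle k (i : 'I_k.+1) : iter k (@ordS k.+1) (ordS i) = i.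
Proof. by apply: val_inj; rewrite -iterSr val_iter_ordS modnDr modn_small. Qed.

(* Walk around the cycle the long way, from [vs (ordS i)] back to [vs i]. *)
Lemma connect_cycle_edge (T : finType) (r : rel T) k (vs : 'I_k.+1 -> T)
    (i : 'I_k.+1) :
  connect_sym r -> (forall j, j != i -> r (vs j) (vs (ordS j))) ->
  connect r (vs i) (vs (ordS i)).
Proof.
move=> r_sym r_cycle; rewrite r_sym.
have walk n : n <= k -> connect r (vs (ordS i)) (vs (iter n (@ordS k.+1) (ordS i))).
  elim: n => [|n IH] le_nk; first exact: connect0.
  apply: connect_trans (IH (ltnW le_nk)) (connect1 _).
  by rewrite iterS; apply/r_cycle/iter_ordS_neq.
by have := walk k (leqnn k); rewrite iter_ordS_cycle.
Qed.

Section MultiGraph.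
Variables (V E : finType) (src tgt : E -> V).
Implicit Types (S T : {set E}) (e : E) (x y u v w : V).

Local Notation joins := (joins src tgt).
Local Notation adj := (adj src tgt).
Local Notation comp := (Pilot.Defs.comp src tgt).
Local Notation comp_partition := (comp_partition src tgt).
Local Notation n_components := (n_components src tgt).
Local Notation acyclic := (acyclic src tgt).

Lemma joinsC e x y : joins e x y = joins e y x.
Proof. by rewrite /joins orbC. Qed.

Lemma joins_src_tgt e : joins e (src e) (tgt e).
Proof. by rewrite /joins !eqxx. Qed.

Lemma adj_joins S e x y : e \in S -> joins e x y -> adj S x y.
Proof. by move=> eS exy; apply/existsP; exists e; rewrite eS. Qed.

Lemma adj_sym S : symmetric (adj S).
Proof.
by move=> x y; apply/existsP/existsP => -[e /andP[eS exy]]; exists e;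
  rewrite eS joinsC.
Qed.

Lemma connect_adj_sym S : connect_sym (adj S).
Proof. exact/sym_connect_sym/adj_sym. Qed.

Lemma connect_joins S e x y :
  joins e x y -> connect (adj S) x y -> connect (adj S) (src e) (tgt e).
Proof.
by case/orP=> /andP[/eqP-> /eqP->] //; rewrite connect_adj_sym.
Qed.

Lemma connect_adj_sub S T :
  (forall e, e \in T -> connect (adj S) (src e) (tgt e)) ->
  forall x y, connect (adj T) x y -> connect (adj S) x y.
Proof.
move=> T_in_S; apply: connect_sub => x y /existsP[e /andP[eT]].
case/orP=> /andP[/eqP<- /eqP<-]; last rewrite connect_adj_sym; exact: T_in_S.
Qed.

Lemma connect_adj_subset S T :
  S \subset T -> forall x y, connect (adj S) x y -> connect (adj T) x y.
Proof.
move=> sST; apply: connect_adj_sub => e eS.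
exact/connect1/adj_joins/joins_src_tgt/(subsetP sST).
Qed.

Lemma connect_adj_setU1 S e :
  connect (adj S) (src e) (tgt e) -> connect (adj (e |: S)) =2 connect (adj S).
Proof.
move=> conn_e x y; apply/idP/idP; last exact/connect_adj_subset/subsetUr.
apply: connect_adj_sub => f; rewrite in_setU1 => /predU1P[-> // | fS].
exact/connect1/adj_joins/joins_src_tgt.
Qed.

Lemma mem_comp S x y : (y \in comp S x) = connect (adj S) x y.
Proof. by rewrite inE. Qed.

Lemma eq_comp S x y : (comp S x == comp S y) = connect (adj S) x y.
Proof.
apply/eqP/idP => [eq_xy | conn_xy]; first by rewrite -mem_comp eq_xy mem_comp.
apply/setP => z; rewrite !mem_comp; apply/idP/idP; last exact: connect_trans.
by apply: connect_trans; rewrite connect_adj_sym.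
Qed.

Lemma comp_partition_mem S A x : A \in comp_partition S -> x \in A -> A = comp S x.
Proof. by case/imsetP=> z _ -> zx; apply/eqP; rewrite eq_comp -mem_comp. Qed.

Lemma comp_partition_eqP S T :
  comp_partition S = comp_partition T <-> connect (adj S) =2 connect (adj T).
Proof.
split=> [eqST | eqST]; last first.
  by apply: eq_imset => x; apply/setP => y; rewrite !mem_comp eqST.
have comp_ST x : comp S x = comp T x.
  apply: (@comp_partition_mem T); last by rewrite mem_comp connect0.
  by rewrite -eqST imset_f.
by move=> x y; rewrite -!mem_comp comp_ST.
Qed.

Lemma n_components_eq1 S x : (forall y, connect (adj S) x y) -> n_components S = 1.
Proof.
move=> conn_x; rewrite /n_components -(cards1 (comp S x)); congr #|pred_of_set _|.
by apply/setP => A; rewrite inE; apply/imsetP/eqP => [[y _ ->] | ->];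
  [apply/eqP; rewrite eq_comp connect_adj_sym | exists x].
Qed.

Lemma n_components_gt1 S : 1 < n_components S -> exists u v, ~~ connect (adj S) u v.
Proof.
case/card_gt1P => _ [_ [/imsetP[u _ ->] /imsetP[v _ ->] neq_uv]].
by exists u, v; rewrite -eq_comp.
Qed.

Lemma n_components_le2 S u v x : n_components S <= 2 ->
  ~~ connect (adj S) u v -> connect (adj S) x u || connect (adj S) x v.
Proof.
move=> le2 disc_uv; rewrite -!eq_comp; apply: contraTT le2 => /norP[neq_xu neq_xv].
have sub3 : comp S x |: [set comp S u; comp S v] \subset comp_partition S.
  by apply/subsetP => A; rewrite !inE => /or3P[]/eqP->; apply: imset_f.
rewrite -ltnNge; apply: leq_trans (subset_leq_card sub3).
by rewrite cardsU1 cards2 !inE (negbTE neq_xu) (negbTE neq_xv) eq_comp disc_uv.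
Qed.

Lemma connect_eq_n_components2 S T :
  1 < n_components S -> n_components T <= 2 ->
  (forall x y, connect (adj T) x y -> connect (adj S) x y) ->
  connect (adj S) =2 connect (adj T).
Proof.
move=> gt1S le2T sub_TS x y; apply/idP/idP => [conn_xy | ]; last exact: sub_TS.
apply/negPn/negP => disc_xy; have [u [v /negP disc_uv]] := n_components_gt1 gt1S.
have conn_x w : connect (adj S) w x.
  case/orP: (n_components_le2 w le2T disc_xy) => /sub_TS // conn_wy.
  by apply: connect_trans conn_wy _; rewrite connect_adj_sym.
by apply: disc_uv; apply: connect_trans (conn_x u) _; rewrite connect_adj_sym.
Qed.

Lemma acyclic_setU1 S e :
  acyclic S -> ~~ connect (adj S) (src e) (tgt e) -> acyclic (e |: S).
Proof.
move=> acS disc_e [k [es [vs [es_inj vs_inj es_in es_joins]]]].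
have [i /eqP es_i | es_neq] := pickP (fun i => es i == e); last first.
  apply: acS; exists k, es, vs; split=> // i.
  by have := es_in i; rewrite in_setU1 es_neq.
apply: (negP disc_e); rewrite -es_i; apply: (connect_joins (es_joins i)).
apply: connect_cycle_edge (@connect_adj_sym S) _ => j neq_ji.
apply: adj_joins (es_joins j); have := es_in j.
by rewrite in_setU1 -es_i (inj_eq es_inj) (negbTE neq_ji).
Qed.

Lemma n_components_setU1 S e : n_components S <= 2 ->
  ~~ connect (adj S) (src e) (tgt e) -> n_components (e |: S) = 1.
Proof.
move=> le2 disc_e; apply: (n_components_eq1 (x := src e)) => y.
have sub_e := connect_adj_subset (subsetUr [set e] S).
have conn_e : connect (adj (e |: S)) (src e) (tgt e).
  exact/connect1/adj_joins/joins_src_tgt/setU11.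
rewrite connect_adj_sym; case/orP: (n_components_le2 y le2 disc_e) => /sub_e // y_tgt.
by apply: connect_trans y_tgt _; rewrite connect_adj_sym.
Qed.

End MultiGraph.

Theorem proposition2p2 (V E : finType) (src tgt : E -> V)
  (Gconn : graph_connected src tgt) (F F' : {set E})
  (HF : is_spanning_2forest src tgt F) (HF' : is_spanning_2forest src tgt F') :
  ~ vertex_equivalent src tgt F F' <->
  exists e, e \in F' /\ is_spanning_tree src tgt (e |: F).
Proof.
case: HF HF' => [acF compF] [_ compF']; split=> [not_equiv | [e [eF' [_ tree_e]]] equiv].
- have [e /andP[eF' disc_e] | all_conn] :=
    pickP (fun e => (e \in F') && ~~ connect (adj src tgt F) (src e) (tgt e)).
    exists e; split=> //; split; first exact: acyclic_setU1.
    by apply: n_components_setU1; rewrite ?compF.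
  case: not_equiv; apply/comp_partition_eqP/connect_eq_n_components2;
    rewrite ?compF ?compF' //.
  apply: connect_adj_sub => e eF'.
  by apply: contraFT (all_conn e) => disc_e; rewrite eF'.
- move/comp_partition_eqP: equiv => equiv.
  have conn_e : connect (adj src tgt F) (src e) (tgt e).
    by rewrite equiv; apply/connect1/adj_joins/joins_src_tgt.
  have same_n : n_components src tgt (e |: F) = n_components src tgt F.
    rewrite /n_components; congr #|pred_of_set _|.
    exact/comp_partition_eqP/connect_adj_setU1.
  by rewrite same_n compF in tree_e.
Qed.
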